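(* For integers $n,m$ and $y=(y_1,y_2,y_3)\in Q$, \[\sum_{r=y_1}^n\sum_{s=y_1+y_2}^m\mathcal{K}_{n,m;r,s}(z,w;q)\Phi_{r,s;y}(1,1;z,w;q)=z^{y_1}w^{y_1+y_2}q^{\frac12(y_1^2+y_2^2+y_3^2)}\Phi_{n,m;y}(1,1;z,w;q)\] and \[\sum_{r=y_1}^n\sum_{s=y_1+y_2}^m\mathcal{K}_{n,m;r,s}(z/q,w;q)\Phi_{r,s;y}(u,v;z,w;q)=z^{y_1}w^{y_1+y_2}q^{\frac12(y_1^2+y_2^2+y_3^2)-y_1}\Phi_{n,m;y}(uzq^{y_{12}},vwq^{y_{23}};z,w;q).\]
   Context: $Q=\{y\in\mathbb{Z}^3:y_1+y_2+y_3=0\}$, $y_{ij}:=y_i-y_j$. For $n\in\mathbb{Z}$, $(a;q)_n=(a;q)_\infty/(aq^n;q)_\infty$ ($1/(q;q)_n=0$ for $n<0$), $(a_1,\dots,a_k;q)_n=\prod_i(a_i;q)_n$. $\mathcal{K}_{n,m;r,s}(z,w;q):=\frac{z^rw^sq^{r^2-rs+s^2}}{(q;q)_{n-r}(q;q)_{m-s}}$. $\Phi_{n,m}(z,w;q):=\frac{(zwq;q)_{n+m}}{(q,zq,zwq;q)_n(q,wq,zwq;q)_m}$; $\Phi_{n,m}(u,v;z,w;q):=\Phi_{n,m}(z/q,w;q)-\frac{uz}{(z;q)_2}\Phi_{n-1,m}(zq,w/q;q)+\frac{uvzw^2}{(w,zw;q)_2}\Phi_{n-1,m-1}(z,wq;q)$;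 and \[\Phi_{n,m;y}(u,v;z,w;q):=\frac{\Phi_{n-y_1,m-y_1-y_2}(u,v;zq^{y_{12}},wq^{y_{23}};q)}{(zq;q)_{y_{12}}(wq;q)_{y_{23}}(zwq;q)_{y_{13}}}.\] *)

(* All quantities live in an arbitrary field R; the paper's
   identities are identities of rational functions in z, w, q (polynomial in
   u, v); we state them pointwise under genericity hypotheses. *)
From HB Require Import structures.
From mathcomp Require Import all_boot all_order all_algebra.
Set Implicit Arguments. Unset Strict Implicit. Unset Printing Implicit Defensive.
Import Order.TTheory GRing.Theory Num.Theory.
Local Open Scope ring_scope.

Section Defs.
Variable R : fieldType.

Definition qpochn (a q : R) (k : nat) : R := \prod_(i < k) (1 - a * q ^+ i).

(* (a;q)_n for n : int, i.e. (a;q)_oo/(aq^n;q)_oo :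
   for n = -(k+1) < 0 it equals 1/(aq^n;q)_(k+1) *)
Definition qpoch (a q : R) (n : int) : R :=
  match n with
  | Posz k => qpochn a q k
  | Negz k => (qpochn (a * q ^ n) q k.+1)^-1
  end.

Definition invqfac (q : R) (n : int) : R :=
  match n with
  | Posz k => (qpochn q q k)^-1
  | Negz _ => 0
  end.

Definition Phi0 (z w q : R) (n m : int) : R :=
  qpoch (z * w * q) q (n + m) * invqfac q n * invqfac q m
  / (qpoch (z * q) q n * qpoch (z * w * q) q n
     * qpoch (w * q) q m * qpoch (z * w * q) q m).

Definition Phi2 (u v z w q : R) (n m : int) : R :=
  Phi0 (z / q) w q n m
  - u * z / qpoch z q 2 * Phi0 (z * q) (w / q) q (n - 1) m
  + u * v * z * w ^+ 2 / (qpoch w q 2 * qpoch (z * w) q 2)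
    * Phi0 z (w * q) q (n - 1) (m - 1).

Definition Phiy (u v z w q : R) (y1 y2 y3 : int) (n m : int) : R :=
  Phi2 u v (z * q ^ (y1 - y2)) (w * q ^ (y2 - y3)) q (n - y1) (m - y1 - y2)
  / (qpoch (z * q) q (y1 - y2) * qpoch (w * q) q (y2 - y3)
     * qpoch (z * w * q) q (y1 - y3)).

Definition Kker (n m r s : int) (z w q : R) : R :=
  z ^ r * w ^ s * q ^ (r ^+ 2 - r * s + s ^+ 2)
  * invqfac q (n - r) * invqfac q (m - s).

Definition zsum (a b : int) (F : int -> R) : R :=
  if a <= b then \sum_(i < (absz (b - a)).+1) F (a + (i : nat)%:Z) else 0.

End Defs.

(* The proof rests on one finite q-series fact, the reproducing property of
   the kernel (Lemma [Phi0_reproducing]):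
     sum_(0<=i<=a, 0<=j<=b) K_(a,b;i,j)(x,y;q) Phi_(i,j)(x,y;q) = Phi_(a,b)(x,y;q).
   Cleared of the factorials (q;q)_a (q;q)_b it becomes [reproducing_nat], a
   double sum of q-binomial coefficients, which is evaluated by expanding a
   ratio of Pochhammer symbols over the q-binomial basis, exchanging the order
   of summation, summing each variable with a terminating q-binomial theorem
   and closing with a q-Pfaff-Saalschuetz type summation.

   Shifting r, s by y pulls
   a monomial z^y1 w^(y1+y2) q^(|y|^2/2) out of the kernel and replaces z, w by
   Z = z q^(y12), W = w q^(y23) ([Kker_shift]).  For u = v = 1, Phi2 reduces to
   Phi by a contiguous relation ([Phi2_11]), giving the first identity.  For
   general u, v, Phi2 is a combination of three Phi's, each reproduced by the
   kernel at z/q ([Phi0_reproducing], [Phi0_reproducing_shiftl],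
   [Phi0_reproducing_shift2]), which gives the second identity.

   All identities are pointwise in an arbitrary field, under the genericity
   hypotheses that keep every Pochhammer symbol in a denominator invertible. *)

From mathcomp Require Import all_boot all_order all_algebra.
From mathcomp Require Import ring zify.
Set Implicit Arguments. Unset Strict Implicit. Unset Printing Implicit Defensive.
Import Order.TTheory GRing.Theory Num.Theory.
Local Open Scope ring_scope.

Section QPochhammer.
Variables (R : fieldType) (q : R).
Implicit Types (c : R) (k m n : nat).

(* [c] is q-generic when no [c * q ^+ k] equals 1; this makes every finite
   Pochhammer symbol [(c q^j; q)_k] invertible. *)
Definition qgeneric c := forall k, c * q ^+ k != 1.

Lemma qpochn0 c : qpochn c q 0 = 1.
Proof. by rewrite /qpochn big_ord0. Qed.

Lemma qpochnS c k : qpochn c q k.+1 = qpochn c q k * (1 - c * q ^+ k).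
Proof. by rewrite /qpochn big_ord_recr. Qed.

Lemma qpochnSl c k : qpochn c q k.+1 = (1 - c) * qpochn (c * q) q k.
Proof.
rewrite /qpochn big_ord_recl expr0 mulr1; congr (_ * _).
by apply: eq_bigr => i _; rewrite exprS mulrA.
Qed.

Lemma qpochnD c m n : qpochn c q (m + n) = qpochn c q m * qpochn (c * q ^+ m) q n.
Proof.
elim: n => [|n IH]; first by rewrite addn0 qpochn0 mulr1.
by rewrite addnS !qpochnS IH -!mulrA exprD mulrA.
Qed.

Lemma qpoch2 c : qpoch c q 2 = (1 - c) * (1 - c * q).
Proof. by rewrite /= /qpochn !big_ord_recr big_ord0 /= expr0 expr1 mulr1 mul1r. Qed.

Lemma qpochn_mulq c n : 1 - c != 0 ->
  qpochn (c * q) q n = qpochn c q n * (1 - c * q ^+ n) / (1 - c).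
Proof. by move=> h; rewrite -qpochnS qpochnSl mulrAC divff // mul1r. Qed.

Lemma qgeneric_shift c m : qgeneric c -> qgeneric (c * q ^+ m).
Proof. by move=> g k; rewrite -mulrA -exprD. Qed.

Lemma qgeneric_mulq c : qgeneric c -> qgeneric (c * q).
Proof. by move=> g; have := qgeneric_shift 1 g; rewrite expr1. Qed.

Lemma qgeneric_factor c k : qgeneric c -> 1 - c * q ^+ k != 0.
Proof. by move=> g; rewrite subr_eq0 eq_sym. Qed.

Lemma qgeneric_factor0 c : qgeneric c -> 1 - c != 0.
Proof. by move=> /(qgeneric_factor 0); rewrite expr0 mulr1. Qed.

Lemma qpochn_neq0 c k : qgeneric c -> qpochn c q k != 0.
Proof.
move=> g; elim: k => [|k IH]; first by rewrite qpochn0 oner_neq0.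
by rewrite qpochnS mulf_neq0 // qgeneric_factor.
Qed.

End QPochhammer.

Section QBinomial.
Variables (R : fieldType) (q : R).
Hypothesis qgen : qgeneric q q.
Implicit Types (a b i j k n : nat).

Definition qbinom n k : R :=
  if (k <= n)%N then qpochn q q n / (qpochn q q k * qpochn q q (n - k)) else 0.

Lemma qbinom_gt n k : (n < k)%N -> qbinom n k = 0.
Proof. by rewrite /qbinom ltnNge => /negbTE ->. Qed.

Lemma qbinom_n0 n : qbinom n 0 = 1.
Proof. by rewrite /qbinom leq0n subn0 qpochn0 mul1r divff // qpochn_neq0. Qed.

Lemma qbinom_nn n : qbinom n n = 1.
Proof. by rewrite /qbinom leqnn subnn qpochn0 mulr1 divff // qpochn_neq0. Qed.

Lemma qbinom_pascal_inner n k : (k < n)%N ->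
  qbinom n.+1 k.+1 = qbinom n k + q ^+ k.+1 * qbinom n k.+1 /\
  qbinom n.+1 k.+1 = q ^+ (n - k) * qbinom n k + qbinom n k.+1.
Proof.
move=> lt; have [d ->] : exists d, n = (k + d.+1)%N by exists (n - k).-1; lia.
rewrite /qbinom !ifT; try lia.
have -> : ((k + d.+1).+1 - k.+1 = d.+1)%N by lia.
have -> : (k + d.+1 - k = d.+1)%N by lia.
have -> : (k + d.+1 - k.+1 = d)%N by lia.
rewrite (qpochnS q q (k + d.+1)) (qpochnS q q k) (qpochnS q q d).
have -> : q * q ^+ (k + d.+1) = (q * q ^+ k) * (q * q ^+ d).
  by rewrite -!exprS -exprD addSn addnS.
have hk := qgeneric_factor k qgen; have hd := qgeneric_factor d qgen.
rewrite !exprS; split; field; rewrite ?qpochn_neq0 ?hk ?hd //.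
Qed.

Lemma qbinomS n k : qbinom n.+1 k.+1 = qbinom n k + q ^+ k.+1 * qbinom n k.+1.
Proof.
case: (ltngtP k n) => [lt|gt|->]; first by case: (qbinom_pascal_inner lt).
- by rewrite !qbinom_gt ?mulr0 ?addr0 // ltnS ltnW.
- by rewrite !qbinom_nn // qbinom_gt // mulr0 addr0.
Qed.

Lemma qbinomS' n k : qbinom n.+1 k.+1 = q ^+ (n - k) * qbinom n k + qbinom n k.+1.
Proof.
case: (ltngtP k n) => [lt|gt|->]; first by case: (qbinom_pascal_inner lt).
- by rewrite !qbinom_gt ?mulr0 ?addr0 // ltnS ltnW.
- by rewrite !qbinom_nn // qbinom_gt // subnn expr0 mul1r addr0.
Qed.

Lemma qbinomS_any n k :
  qbinom n.+1 k = (if k is k'.+1 then qbinom n k' else 0) + q ^+ k * qbinom n k.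
Proof. by case: k => [|k]; [rewrite !qbinom_n0 add0r expr0 mul1r | exact: qbinomS]. Qed.

Lemma qbinomS_any' n k :
  qbinom n.+1 k = (if k is k'.+1 then q ^+ (n - k') * qbinom n k' else 0) + qbinom n k.
Proof. by case: k => [|k]; [rewrite !qbinom_n0 add0r | exact: qbinomS']. Qed.

Lemma qbinom_mulS n k :
  qbinom n.+1 k.+1 * qpochn q q k.+1 = (1 - q ^+ n.+1) * (qbinom n k * qpochn q q k).
Proof.
case: (leqP k n) => h; last by rewrite !qbinom_gt ?mul0r ?mulr0.
rewrite /qbinom !ifT //; have -> : (n.+1 - k.+1 = n - k)%N by lia.
by rewrite (qpochnS q q n) exprS; field; rewrite ?qpochn_neq0.
Qed.

Lemma qbinom_revision a i k : (k <= i)%N ->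
  qbinom a i * qbinom i k = qbinom a k * qbinom (a - k) (i - k).
Proof.
move=> ki; case: (leqP i a) => ia; last first.
  rewrite (qbinom_gt ia) mul0r; case: (leqP k a) => ka; last by rewrite qbinom_gt ?mul0r.
  by rewrite (@qbinom_gt (a - k) (i - k)) ?mulr0 //; lia.
rewrite /qbinom !ifT; try lia.
have -> : (a - k - (i - k) = a - i)%N by lia.
by field; rewrite ?qpochn_neq0.
Qed.

End QBinomial.

Section QSeries.
Variables (R : fieldType) (q : R).
Hypothesis qgen : qgeneric q q.
Implicit Types (a b i j k n : nat) (c x y : R).
Local Notation qbinom := (qbinom q).

Lemma sum_qbinom_inv_qpoch n x : qgeneric q (x * q) ->
  \sum_(i < n.+1) qbinom n i * x ^+ i * q ^+ (i * i) / qpochn (x * q) q i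
  = (qpochn (x * q) q n)^-1.
Proof.
elim: n x => [|n IH] x gx.
  by rewrite big_ord1 /= qbinom_n0 // !qpochn0 muln0 !expr0 !mul1r invr1.
have h1 := qgeneric_factor0 gx; have h2 := qgeneric_factor n gx.
have gxq := qgeneric_mulq gx.
rewrite big_ord_recl /=.
under eq_bigr => i _ do rewrite /bump /= add1n qbinomS' // !mulrDl.
rewrite big_split /= addrA addrAC.
have -> : qbinom n.+1 0 * x ^+ 0 * q ^+ (0 * 0) / qpochn (x * q) q 0 +
    \sum_(i < n.+1) qbinom n i.+1 * x ^+ i.+1 * q ^+ (i.+1 * i.+1)
      / qpochn (x * q) q i.+1
  = (qpochn (x * q) q n)^-1.
  pose F i := qbinom n i * x ^+ i * q ^+ (i * i) / qpochn (x * q) q i.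
  have E : \sum_(i < n.+2) F i = \sum_(i < n.+1) F i.
    by rewrite big_ord_recr /= /F qbinom_gt // !mul0r addr0.
  by rewrite -IH // -E [RHS]big_ord_recl /= /F !qbinom_n0.
have -> : \sum_(i < n.+1) q ^+ (n - i) * qbinom n i * x ^+ i.+1
      * q ^+ (i.+1 * i.+1) / qpochn (x * q) q i.+1
  = x * q ^+ n.+1 / (1 - x * q) * \sum_(i < n.+1) qbinom n i * (x * q) ^+ i
      * q ^+ (i * i) / qpochn (x * q * q) q i.
  rewrite mulr_sumr; apply: eq_bigr => i _.
  have hi := ltn_ord i.
  have -> : q ^+ (n - i) * qbinom n i * x ^+ i.+1 * q ^+ (i.+1 * i.+1) =
      qbinom n i * (x ^+ i.+1 * (q ^+ n.+1 * q ^+ i * q ^+ (i * i))).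
    rewrite -!exprD; have -> : (n.+1 + i + i * i = n - i + i.+1 * i.+1)%N by nia.
    by rewrite exprD; ring.
  rewrite qpochnSl exprMn exprS.
  by field; rewrite h1 !qpochn_neq0.
rewrite IH //.
rewrite (qpochn_mulq _ _ h1) (qpochnS _ (x * q)) exprS.
by field; rewrite h1 h2 !qpochn_neq0.
Qed.

(* The same sum weighted by [i choose k]_q, reduced to the previous one by
   q-binomial revision and the shift x -> x q^k. *)
Lemma sum_qbinom_revision_inv_qpoch a k x : qgeneric q (x * q) ->
  \sum_(i < a.+1) qbinom a i * qbinom i k * x ^+ i
      * q ^+ (k * (i - k) + (i - k) * (i - k)) / qpochn (x * q) q i
  = qbinom a k * x ^+ k / qpochn (x * q) q a.
Proof.
move=> gx; have gxk : qgeneric q (x * q ^+ k * q) by rewrite mulrAC; apply: qgeneric_shift.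
case: (leqP k a) => ka; last first.
  rewrite (qbinom_gt _ ka) !mul0r big1 // => i _.
  by rewrite (@qbinom_gt _ _ i k) ?mulr0 ?mul0r //; move: (ltn_ord i); lia.
rewrite -(big_mkord xpredT (fun i => qbinom a i * qbinom i k * x ^+ i *
   q ^+ (k * (i - k) + (i - k) * (i - k)) / qpochn (x * q) q i)).
rewrite (@big_cat_nat _ _ _ k 0 a.+1) /=; [|lia|lia].
rewrite big1_seq ?add0r; last first.
  move=> i; rewrite mem_index_iota => /andP[_ hi].
  by rewrite (@qbinom_gt _ _ i k) // mulr0 !mul0r.
rewrite -{1}(add0n k) big_addn big_mkord (_ : (a.+1 - k = (a - k).+1)%N); last by lia.
have E (i : 'I_(a - k).+1) :
    qbinom a (i + k) * qbinom (i + k) k * x ^+ (i + k) *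
    q ^+ (k * (i + k - k) + (i + k - k) * (i + k - k)) / qpochn (x * q) q (i + k)
  = qbinom a k * x ^+ k / qpochn (x * q) q k *
    (qbinom (a - k) i * (x * q ^+ k) ^+ i * q ^+ (i * i)
       / qpochn (x * q ^+ k * q) q i).
  rewrite qbinom_revision ?leq_addl // (_ : (i + k - k = i)%N); last by lia.
  rewrite addnC qpochnD [x * q ^+ k * q]mulrAC exprD exprMn exprD exprM.
  by field; rewrite !qpochn_neq0 //; apply: qgeneric_shift.
rewrite (eq_bigr _ (fun (i : 'I_(a - k).+1) _ => E i)) -mulr_sumr.
rewrite sum_qbinom_inv_qpoch // -[in qpochn _ q a](subnKC ka) qpochnD [x * q ^+ k * q]mulrAC.
by field; rewrite !qpochn_neq0 //; apply: qgeneric_shift.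
Qed.

Lemma qpoch_ratio_expansion j i C : qgeneric q C ->
  qpochn (C * q ^+ i) q j / qpochn C q j
  = \sum_(k < i.+1) qbinom i k * qbinom j k * qpochn q q k
      * q ^+ ((i - k) * (j - k)) / qpochn C q k.
Proof.
elim: j i C => [|j IH] i C gC.
  rewrite !qpochn0 divr1 big_ord_recl /= big1 ?addr0; last first.
    by move=> k _; rewrite (@qbinom_gt _ _ 0 (bump 0 k)) // mulr0 !mul0r.
  by rewrite !qbinom_n0 // !qpochn0 muln0 expr0 invr1 !mulr1.
case: i => [|i].
  rewrite big_ord1 /= expr0 mulr1 divff ?qpochn_neq0 //.
  by rewrite !qbinom_n0 // !qpochn0 invr1 !mulr1.
have hC := qgeneric_factor0 gC; have hCj := qgeneric_factor j gC.
have gCq := qgeneric_mulq gC.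
under eq_bigr => k _ do rewrite (qbinomS_any qgen j) mulrDr !mulrDl.
rewrite big_split /=.
have -> : \sum_(k < i.+2) qbinom i.+1 k * (if (k : nat) is k'.+1 then qbinom j k' else 0)
      * qpochn q q k * q ^+ ((i.+1 - k) * (j.+1 - k)) / qpochn C q k
  = (1 - q ^+ i.+1) / (1 - C) * (qpochn (C * q * q ^+ i) q j / qpochn (C * q) q j).
  rewrite IH // big_ord_recl /= mulr0 !mul0r add0r mulr_sumr.
  apply: eq_bigr => k _; rewrite /bump /= add1n !subSS.
  have -> : qbinom i.+1 k.+1 * qbinom j k * qpochn q q k.+1 =
      qbinom i.+1 k.+1 * qpochn q q k.+1 * qbinom j k by ring.
  rewrite qbinom_mulS // (qpochnSl _ C) exprS.
  by field; rewrite hC !qpochn_neq0.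
have -> : \sum_(k < i.+2) qbinom i.+1 k * (q ^+ k * qbinom j k) * qpochn q q k
      * q ^+ ((i.+1 - k) * (j.+1 - k)) / qpochn C q k
  = q ^+ i.+1 * (qpochn (C * q ^+ i.+1) q j / qpochn C q j).
  rewrite IH // mulr_sumr; apply: eq_bigr => k _.
  case: (leqP k j) => kj; last by rewrite (@qbinom_gt _ _ j k) // !mulr0 !mul0r mulr0.
  have -> : ((i.+1 - k) * (j.+1 - k) = (i.+1 - k) + (i.+1 - k) * (j - k))%N by nia.
  have -> : q ^+ i.+1 = q ^+ k * q ^+ (i.+1 - k) by rewrite -exprD subnKC // -ltnS.
  by rewrite exprD; ring.
rewrite (qpochnS _ C) (qpochnS _ (C * q ^+ i.+1)) (qpochn_mulq _ _ hC).
rewrite -[C * q * q ^+ i]mulrA -exprS exprS.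
by field; rewrite hC hCj !qpochn_neq0.
Qed.

Lemma sum_qbinom_pair b a c : qgeneric q (c * q) ->
  \sum_(k < a.+1) qbinom a k * qbinom b k * qpochn q q k * c ^+ k * q ^+ (k * k)
      / qpochn (c * q) q k
  = qpochn (c * q ^+ a.+1) q b / qpochn (c * q) q b.
Proof.
elim: b a c => [|b IH] a c gc.
  rewrite !qpochn0 divr1 big_ord_recl /= big1 ?addr0; last first.
    by move=> k _; rewrite (@qbinom_gt _ _ 0 (bump 0 k)) // mulr0 !mul0r.
  by rewrite !qbinom_n0 // !qpochn0 muln0 !expr0 invr1 !mulr1.
case: a => [|a].
  rewrite big_ord1 /= !qbinom_n0 // !qpochn0 !expr0 expr1 divff ?qpochn_neq0 //.
  by rewrite invr1 !mulr1.
have hc := qgeneric_factor0 gc; have hcb := qgeneric_factor b gc.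
have gcq := qgeneric_mulq gc.
under eq_bigr => k _ do rewrite (qbinomS_any' qgen b) mulrDr !mulrDl.
rewrite big_split /= IH //.
have -> : \sum_(k < a.+2) qbinom a.+1 k
      * (if (k : nat) is k'.+1 then q ^+ (b - k') * qbinom b k' else 0)
      * qpochn q q k * c ^+ k * q ^+ (k * k) / qpochn (c * q) q k
  = (1 - q ^+ a.+1) * c * q ^+ b.+1 / (1 - c * q) *
     (qpochn (c * q * q ^+ a.+1) q b / qpochn (c * q * q) q b).
  rewrite -IH // big_ord_recl /= mulr0 !mul0r add0r mulr_sumr.
  apply: eq_bigr => k _; rewrite /bump /= add1n.
  case: (leqP k b) => kb; last by rewrite (@qbinom_gt _ _ b k) // !mulr0 !mul0r !mulr0.
  have e1 : q ^+ (b - k) * q ^+ (k.+1 * k.+1) = q ^+ b.+1 * q ^+ k * q ^+ (k * k).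
    by rewrite -!exprD; congr (_ ^+ _); nia.
  have -> : qbinom a.+1 k.+1 * (q ^+ (b - k) * qbinom b k) * qpochn q q k.+1
      * c ^+ k.+1 * q ^+ (k.+1 * k.+1) = (qbinom a.+1 k.+1 * qpochn q q k.+1)
      * qbinom b k * c ^+ k.+1 * (q ^+ (b - k) * q ^+ (k.+1 * k.+1)) by ring.
  rewrite qbinom_mulS // e1 (qpochnSl _ (c * q)) exprMn !exprS.
  by field; rewrite hc !qpochn_neq0.
rewrite (qpochnS _ (c * q)) (qpochnS _ (c * q ^+ a.+2)) (qpochn_mulq _ b hc).
rewrite -[c * q * q ^+ a.+1]mulrA -exprS.
have -> : c * q ^+ a.+2 * q ^+ b = c * q * q ^+ b * q ^+ a.+1 by rewrite !exprS; ring.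
by rewrite !exprS; field; rewrite hc hcb !qpochn_neq0.
Qed.

End QSeries.

Lemma sum_ord_pad (R : zmodType) (f : nat -> R) i a : (i <= a)%N ->
  (forall k, (i < k)%N -> f k = 0) ->
  \sum_(k < i.+1) f k = \sum_(k < a.+1) f k.
Proof.
move=> ia hf; rewrite -!(big_mkord xpredT f).
rewrite [in RHS](@big_cat_nat _ _ _ i.+1 0 a.+1) //= [X in _ = _ + X]big1_seq ?addr0 //.
by move=> k /andP[_]; rewrite mem_index_iota => /andP[h _]; apply: hf.
Qed.

Section Reproducing.
Variables (R : fieldType) (q : R).
Hypothesis qgen : qgeneric q q.
Local Notation qbinom := (qbinom q).

(* The reproducing identity for Phi, cleared of the factorials (q;q)_a (q;q)_b:
   expand (xyq^(i+1);q)_j/(xyq;q)_j by [qpoch_ratio_expansion], exchange the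
   sums, perform the i- and j-sums by [sum_qbinom_revision_inv_qpoch] and
   close with [sum_qbinom_pair]. *)
Lemma reproducing_nat (x y : R) a b :
  qgeneric q (x * q) -> qgeneric q (y * q) -> qgeneric q (x * y * q) ->
  \sum_(i < a.+1) \sum_(j < b.+1) qbinom a i * qbinom b j * x ^+ i * y ^+ j *
     q ^+ (i * i + j * j - i * j) * qpochn (x * y * q * q ^+ i) q j
     / (qpochn (x * y * q) q j * qpochn (x * q) q i * qpochn (y * q) q j)
  = qpochn (x * y * q * q ^+ a) q b
     / (qpochn (x * y * q) q b * qpochn (x * q) q a * qpochn (y * q) q b).
Proof.
move=> gx gy gxy; set C := x * y * q.
pose g (i j k : nat) := qbinom a i * qbinom b j * x ^+ i * y ^+ j *
  q ^+ (i * i + j * j - i * j + (i - k) * (j - k))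
  / (qpochn (x * q) q i * qpochn (y * q) q j) *
  (qbinom i k * qbinom j k * qpochn q q k / qpochn C q k).
have expand (i : 'I_a.+1) (j : 'I_b.+1) :
    qbinom a i * qbinom b j * x ^+ i * y ^+ j *
      q ^+ (i * i + j * j - i * j) * qpochn (C * q ^+ i) q j
      / (qpochn C q j * qpochn (x * q) q i * qpochn (y * q) q j)
    = \sum_(k < a.+1) g i j k.
  rewrite -(@sum_ord_pad _ (g i j) i a); last 2 first.
  - by rewrite -ltnS.
  - by move=> k ik; rewrite /g (@qbinom_gt _ _ i k) // !mul0r mulr0.
  transitivity (\sum_(k < i.+1) qbinom a i * qbinom b j * x ^+ i * y ^+ j *
     q ^+ (i * i + j * j - i * j) / (qpochn (x * q) q i * qpochn (y * q) q j) *
     (qbinom i k * qbinom j k * qpochn q q k * q ^+ ((i - k) * (j - k))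
       / qpochn C q k)).
    by rewrite -mulr_sumr -qpoch_ratio_expansion //; field; rewrite !qpochn_neq0.
  by apply: eq_bigr => k _; rewrite /g exprD; ring.
rewrite (eq_bigr _ (fun i _ => eq_bigr _ (fun j _ => expand i j))).
under eq_bigr => i _ do rewrite exchange_big.
rewrite exchange_big /=.
have factor (k : 'I_a.+1) :
    \sum_(i < a.+1) \sum_(j < b.+1) g i j k =
    qpochn q q k / qpochn C q k * q ^+ (k * k) *
    ((\sum_(i < a.+1) qbinom a i * qbinom i k * x ^+ i
        * q ^+ (k * (i - k) + (i - k) * (i - k)) / qpochn (x * q) q i) *
     (\sum_(j < b.+1) qbinom b j * qbinom j k * y ^+ j
        * q ^+ (k * (j - k) + (j - k) * (j - k)) / qpochn (y * q) q j)).
  rewrite big_distrl mulr_sumr; apply: eq_bigr => i _.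
  rewrite big_distrr mulr_sumr; apply: eq_bigr => j _; rewrite /g.
  case: (leqP k i) => ki; last by rewrite (@qbinom_gt _ _ i k) //= !(mulr0, mul0r).
  case: (leqP k j) => kj; last by rewrite (@qbinom_gt _ _ j k) //= !(mulr0, mul0r).
  have -> : (i * i + j * j - i * j + (i - k) * (j - k) =
      k * k + (k * (i - k) + (i - k) * (i - k)) + (k * (j - k) + (j - k) * (j - k)))%N.
    by move: ki kj => /subnK <- /subnK <-; rewrite !addnK; nia.
  by rewrite !exprD /=; field; rewrite !qpochn_neq0.
rewrite (eq_bigr _ (fun k _ => factor k)).
under eq_bigr => k _ do rewrite !sum_qbinom_revision_inv_qpoch //.
have -> : C * q ^+ a = (x * y) * q ^+ a.+1 by rewrite /C exprS !mulrA.
rewrite [RHS](_ : _ = (qpochn (x * y * q ^+ a.+1) q b / qpochn (x * y * q) q b) /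
   (qpochn (x * q) q a * qpochn (y * q) q b)); last first.
  by rewrite /C; field; rewrite !qpochn_neq0.
rewrite -sum_qbinom_pair // mulr_suml; apply: eq_bigr => k _.
by rewrite exprMn /C; field; rewrite !qpochn_neq0.
Qed.

End Reproducing.

Section IntegerSums.
Variable R : fieldType.
Implicit Types (a b c d : int) (f g : int -> R).

Lemma PoszS_sub1 (k : nat) : k.+1%:Z - 1 = k.
Proof. by rewrite -addn1 PoszD addrK. Qed.

Lemma zsum_ext a b f g : (forall i, f i = g i) -> zsum a b f = zsum a b g.
Proof. by move=> h; rewrite /zsum; case: ifP => // _; apply: eq_bigr. Qed.

Lemma zsum_eq0 a b f : (forall i, f i = 0) -> zsum a b f = 0.
Proof. by move=> h; rewrite /zsum; case: ifP => // _; rewrite big1. Qed.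

Lemma zsum_nat (a : nat) f : zsum 0 a f = \sum_(i < a.+1) f i.
Proof.
by rewrite /zsum le0z_nat subr0 absz_nat; apply: eq_bigr => i _; rewrite add0r.
Qed.

Lemma zsum_neg a f : a < 0 -> zsum 0 a f = 0.
Proof. by move=> h; rewrite /zsum leNgt h. Qed.

Lemma zsum_shift c d f : zsum c d f = zsum 0 (d - c) (fun i => f (c + i)).
Proof. by rewrite /zsum subr_ge0 subr0. Qed.

Lemma zsum_drop0 a f : f 0 = 0 -> zsum 0 a f = zsum 0 (a - 1) (fun i => f (i + 1)).
Proof.
move=> f0; case: a => [[|a]|a]; last by rewrite !zsum_neg //; lia.
  by rewrite zsum_nat big_ord1 f0 zsum_neg.
rewrite PoszS_sub1 !zsum_nat big_ord_recl f0 add0r; apply: eq_bigr => i _.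
by congr f; rewrite lift0 -addn1 PoszD.
Qed.

Lemma zsum_add a b f g : zsum a b (fun i => f i + g i) = zsum a b f + zsum a b g.
Proof. by rewrite /zsum; case: ifP; rewrite ?addr0 // big_split. Qed.

Lemma zsum_mull a b (c : R) f : zsum a b (fun i => c * f i) = c * zsum a b f.
Proof. by rewrite /zsum; case: ifP; rewrite ?mulr0 // mulr_sumr. Qed.

Lemma zsum2_lin a1 b1 a2 b2 (c al be : R) (F G H : int -> int -> R) :
  zsum a1 b1 (fun i => zsum a2 b2 (fun j => c * (F i j + al * G i j + be * H i j)))
  = c * (zsum a1 b1 (fun i => zsum a2 b2 (F i))
         + al * zsum a1 b1 (fun i => zsum a2 b2 (G i))
         + be * zsum a1 b1 (fun i => zsum a2 b2 (H i))).
Proof.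
have lin3 (F' G' H' : int -> R) a b : zsum a b (fun i => F' i + al * G' i + be * H' i)
    = zsum a b F' + al * zsum a b G' + be * zsum a b H'.
  rewrite (zsum_add _ _ (fun i => F' i + al * G' i) (fun i => be * H' i)).
  by rewrite (zsum_add _ _ F' (fun i => al * G' i)) !zsum_mull.
transitivity (zsum a1 b1 (fun i => c * (zsum a2 b2 (F i)
    + al * zsum a2 b2 (G i) + be * zsum a2 b2 (H i)))).
  by apply: zsum_ext => i; rewrite zsum_mull lin3.
by rewrite zsum_mull lin3.
Qed.

End IntegerSums.

Section PhiReproducing.
Variables (R : fieldType) (q : R).
Hypothesis qgen : qgeneric q q.

(* Phi vanishes at a negative index, because 1/(q;q)_n = 0 for n < 0. *)
Lemma Phi0_negl (x y : R) a b : a < 0 -> Phi0 x y q a b = 0.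
Proof. by case: a => // a _; rewrite /Phi0 /= mulr0 !mul0r. Qed.

Lemma Phi0_negr (x y : R) a b : b < 0 -> Phi0 x y q a b = 0.
Proof. by case: b => // b _; rewrite /Phi0 /= !mulr0 !mul0r. Qed.

Lemma kernel_exponent_nat (i j : nat) :
  (i%:Z) ^+ 2 - i%:Z * j%:Z + (j%:Z) ^+ 2 = (i * i + j * j - i * j)%N.
Proof.
have h : (i * j <= i * i + j * j)%N by nia.
by rewrite -subzn // PoszD !PoszM; ring.
Qed.

Lemma Phi0_reproducing (x y : R) (a b : int) :
  qgeneric q (x * q) -> qgeneric q (y * q) -> qgeneric q (x * y * q) ->
  zsum 0 a (fun i => zsum 0 b (fun j => Kker a b i j x y q * Phi0 x y q i j))
  = Phi0 x y q a b.
Proof.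
move=> gx gy gxy.
case: a => [a|a]; last by rewrite zsum_neg // Phi0_negl.
case: b => [b|b]; last first.
  by rewrite zsum_eq0 ?Phi0_negr // => i; rewrite zsum_neg.
rewrite zsum_nat; under eq_bigr => i _ do rewrite zsum_nat.
have cleared (i : 'I_a.+1) (j : 'I_b.+1) :
    Kker a b i j x y q * Phi0 x y q i j =
    (qbinom q a i * qbinom q b j * x ^+ i * y ^+ j *
     q ^+ (i * i + j * j - i * j) * qpochn (x * y * q * q ^+ i) q j
     / (qpochn (x * y * q) q j * qpochn (x * q) q i * qpochn (y * q) q j))
    / (qpochn q q a * qpochn q q b).
  have hi : (i <= a)%N by rewrite -ltnS.
  have hj : (j <= b)%N by rewrite -ltnS.
  rewrite /Kker /Phi0 kernel_exponent_nat /= -!exprnP subzn // subzn //=.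
  by rewrite /qbinom !ifT // qpochnD; field; rewrite !qpochn_neq0.
rewrite (eq_bigr _ (fun i _ => eq_bigr _ (fun j _ => cleared i j))).
under eq_bigr => i _ do rewrite -mulr_suml.
rewrite -mulr_suml reproducing_nat // /Phi0 /= qpochnD.
by field; rewrite !qpochn_neq0.
Qed.

End PhiReproducing.

Section Contiguity.
Variables (R : fieldType) (q x y : R).
Hypotheses (hq : q != 0) (qgen : qgeneric q q).
Hypotheses (gx : qgeneric q x) (gy : qgeneric q y) (gxy : qgeneric q (x * y)).

(* The contiguous relation behind Phi_(n,m)(1,1;x,y;q) = Phi_(n,m)(x,y;q),
   for positive indices where all three terms of Phi2 are present. *)
Lemma Phi2_11_succ (a b : nat) : Phi2 1 1 x y q a.+1 b.+1 = Phi0 x y q a.+1 b.+1.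
Proof.
have gxq := qgeneric_mulq gx; have gyq := qgeneric_mulq gy.
have gC := qgeneric_mulq gxy; have gCq := qgeneric_mulq gC.
have hx := qgeneric_factor0 gx; have hxq := qgeneric_factor0 gxq.
have hyq := qgeneric_factor0 gyq; have hC := qgeneric_factor0 gC.
rewrite /Phi2 !qpoch2 !PoszS_sub1.
rewrite /Phi0 /= (_ : x / q * y * q = x * y); last by field.
rewrite (_ : x / q * q = x); last by field.
rewrite (_ : x * q * (y / q) * q = x * y * q); last by field.
rewrite (_ : y / q * q = y); last by field.
rewrite (_ : x * (y * q) * q = x * y * q * q); last by ring.
rewrite !addSn !addnS (qpochnSl _ (x * y) (a + b).+1).
set C := x * y * q.
rewrite (qpochnS _ C (a + b).+1) (qpochnS _ C (a + b)) (qpochn_mulq _ (a + b) hC).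
rewrite (qpochnS q q a) (qpochnS q q b) (qpochnSl _ x a) (qpochnSl _ (x * y) a).
rewrite (qpochnSl _ (x * y) b) -/C (qpochnS _ (y * q) b) (qpochn_mulq _ a hxq).
rewrite (qpochnSl _ y b) (qpochnS _ C b) (qpochnS _ C a) (qpochn_mulq _ a hC).
rewrite (qpochn_mulq _ b hC) (qpochn_mulq _ b hyq) (qpochnS _ (x * q) a).
rewrite (exprS q (a + b)) !exprD /C.
by field; rewrite !qgeneric_factor // !qpochn_neq0 // !(qgeneric_factor0 (q := q)).
Qed.

Lemma Phi2_11 (a b : int) : Phi2 1 1 x y q a b = Phi0 x y q a b.
Proof.
have gxq := qgeneric_mulq gx; have gyq := qgeneric_mulq gy.
have gC := qgeneric_mulq gxy; have hxq := qgeneric_factor0 gxq.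
case: (ltP a 0) => ha; first by rewrite /Phi2 !Phi0_negl ?mulr0 ?subrr ?addr0 //; lia.
case: (ltP b 0) => hb; first by rewrite /Phi2 !Phi0_negr ?mulr0 ?subrr ?addr0 //; lia.
case: a ha => // a _; case: b hb => // b _; case: a => [|a].
  rewrite /Phi2 !(@Phi0_negl _ _ _ _ (0 - 1)) // !mulr0 subr0 addr0 /Phi0 /=.
  rewrite (_ : x / q * y * q = x * y); last by field.
  rewrite (_ : x / q * q = x); last by field.
  by rewrite !qpochn0 add0n; field; rewrite !qpochn_neq0 ?oner_neq0.
case: b => [|b]; last exact: Phi2_11_succ.
rewrite /Phi2 (@Phi0_negr _ _ _ _ _ (0 - 1)) // mulr0 addr0 qpoch2.
rewrite PoszS_sub1 /Phi0 /= (_ : x / q * y * q = x * y); last by field.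
rewrite (_ : x / q * q = x); last by field.
rewrite (_ : x * q * (y / q) * q = x * y * q); last by field.
rewrite (_ : y / q * q = y); last by field.
rewrite !addn0 !qpochn0 (qpochnS q q a) (qpochnSl _ x a) (qpochnSl _ (x * y) a).
rewrite (qpochnS _ (x * y * q) a) (qpochn_mulq _ a hxq) (qpochnS _ (x * q) a).
by field; rewrite !qgeneric_factor // !qpochn_neq0 // oner_neq0 !(qgeneric_factor0 (q := q)).
Qed.

End Contiguity.

Section KernelShifts.
Variables (R : fieldType) (q : R).
Hypothesis hq : q != 0.

Lemma Kker_shift (x w : R) (n m y1 y2 y3 i j : int) :
  y1 + y2 + y3 = 0 -> x != 0 -> w != 0 ->
  Kker n m (y1 + i) (y1 + y2 + j) x w q =
  x ^ y1 * w ^ (y1 + y2) * q ^ (y1 ^+ 2 + y1 * y2 + y2 ^+ 2) *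
  Kker (n - y1) (m - y1 - y2) i j (x * q ^ (y1 - y2)) (w * q ^ (y2 - y3)) q.
Proof.
move=> hQ hx hw; have -> : y3 = - y1 - y2 by lia.
rewrite /Kker !expfzMl !exprz_exp (expfzDr _ _ hx) (expfzDr (y1 + y2) _ hw).
rewrite (_ : n - (y1 + i) = n - y1 - i); last by ring.
rewrite (_ : m - (y1 + y2 + j) = m - y1 - y2 - j); last by ring.
have -> : q ^ ((y1 + i) ^+ 2 - (y1 + i) * (y1 + y2 + j) + (y1 + y2 + j) ^+ 2) =
    q ^ (y1 ^+ 2 + y1 * y2 + y2 ^+ 2) * (q ^ ((y1 - y2) * i)
    * q ^ ((y2 - (- y1 - y2)) * j) * q ^ (i ^+ 2 - i * j + j ^+ 2)).
  by rewrite -!expfzDr //; congr (_ ^ _); ring.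
by ring.
Qed.

Lemma Kker_shiftl (x y : R) (a b i j : int) : x != 0 -> y != 0 ->
  Kker a b (i + 1) j (x / q) y q = x * Kker (a - 1) b i j (x * q) (y / q) q.
Proof.
move=> hx hy; rewrite /Kker !expfzMl !exprz_inv (expfzDr i 1 hx) expr1z.
rewrite (_ : a - (i + 1) = a - 1 - i); last by ring.
have Eq : q ^ (- (i + 1)) * q ^ ((i + 1) ^+ 2 - (i + 1) * j + j ^+ 2) =
    q ^ i * q ^ (- j) * q ^ (i ^+ 2 - i * j + j ^+ 2).
  by rewrite -!expfzDr //; congr (_ ^ _); ring.
transitivity (x * x ^ i * y ^ j * invqfac q (a - 1 - i) * invqfac q (b - j) *
  (q ^ (- (i + 1)) * q ^ ((i + 1) ^+ 2 - (i + 1) * j + j ^+ 2))); first by ring.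
by rewrite Eq; ring.
Qed.

Lemma Kker_shift2 (x y : R) (a b i j : int) : x != 0 -> y != 0 ->
  Kker a b (i + 1) (j + 1) (x / q) y q = x * y * Kker (a - 1) (b - 1) i j x (y * q) q.
Proof.
move=> hx hy; rewrite /Kker !expfzMl !exprz_inv (expfzDr i 1 hx) (expfzDr j 1 hy).
rewrite !expr1z (_ : a - (i + 1) = a - 1 - i); last by ring.
rewrite (_ : b - (j + 1) = b - 1 - j); last by ring.
have Eq : q ^ (- (i + 1)) * q ^ ((i + 1) ^+ 2 - (i + 1) * (j + 1) + (j + 1) ^+ 2) =
    q ^ j * q ^ (i ^+ 2 - i * j + j ^+ 2).
  by rewrite -!expfzDr //; congr (_ ^ _); ring.
transitivity (x * x ^ i * (y * y ^ j) * invqfac q (a - 1 - i) * invqfac q (b - 1 - j) *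
  (q ^ (- (i + 1)) * q ^ ((i + 1) ^+ 2 - (i + 1) * (j + 1) + (j + 1) ^+ 2)));
  first by ring.
by rewrite Eq; ring.
Qed.

End KernelShifts.

Section ShiftedReproducing.
Variables (R : fieldType) (q x y : R).
Hypotheses (hq : q != 0) (hx : x != 0) (hy : y != 0) (qgen : qgeneric q q).

(* Reproducing property for the second term of Phi2: the kernel at x/q
   reproduces Phi at (xq, y/q) with first index lowered by one. *)
Lemma Phi0_reproducing_shiftl (a b : int) :
  qgeneric q (x * q * q) -> qgeneric q y -> qgeneric q (x * y * q) ->
  zsum 0 a (fun i => zsum 0 b (fun j =>
     Kker a b i j (x / q) y q * Phi0 (x * q) (y / q) q (i - 1) j))
  = x * Phi0 (x * q) (y / q) q (a - 1) b.
Proof.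
move=> gxqq gy gxy.
rewrite zsum_drop0; last by rewrite zsum_eq0 // => j; rewrite Phi0_negl ?mulr0.
have E i : zsum 0 b (fun j => Kker a b (i + 1) j (x / q) y q
             * Phi0 (x * q) (y / q) q (i + 1 - 1) j)
    = x * zsum 0 b (fun j => Kker (a - 1) b i j (x * q) (y / q) q
             * Phi0 (x * q) (y / q) q i j).
  rewrite -zsum_mull; apply: zsum_ext => j.
  by rewrite Kker_shiftl // addrK mulrA.
rewrite (zsum_ext _ _ E) zsum_mull Phi0_reproducing //; first by rewrite divfK.
by rewrite (_ : x * q * (y / q) * q = x * y * q) //; field.
Qed.

(* Reproducing property for the third term of Phi2: the kernel at x/q
   reproduces Phi at (x, yq) with both indices lowered by one. *)
Lemma Phi0_reproducing_shift2 (a b : int) :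
  qgeneric q (x * q) -> qgeneric q (y * q * q) -> qgeneric q (x * y * q * q) ->
  zsum 0 a (fun i => zsum 0 b (fun j =>
     Kker a b i j (x / q) y q * Phi0 x (y * q) q (i - 1) (j - 1)))
  = x * y * Phi0 x (y * q) q (a - 1) (b - 1).
Proof.
move=> gxq gyqq gxyqq.
rewrite zsum_drop0; last by rewrite zsum_eq0 // => j; rewrite Phi0_negl ?mulr0.
have E i : zsum 0 b (fun j => Kker a b (i + 1) j (x / q) y q
             * Phi0 x (y * q) q (i + 1 - 1) (j - 1))
    = x * y * zsum 0 (b - 1) (fun j => Kker (a - 1) (b - 1) i j x (y * q) q
             * Phi0 x (y * q) q i j).
  rewrite zsum_drop0; last by rewrite Phi0_negr ?mulr0.
  rewrite -zsum_mull; apply: zsum_ext => j.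
  by rewrite Kker_shift2 // !addrK mulrA.
rewrite (zsum_ext _ _ E) zsum_mull Phi0_reproducing //.
by rewrite (_ : x * (y * q) * q = x * y * q * q) //; ring.
Qed.

End ShiftedReproducing.

Lemma qgeneric_int (R : fieldType) (q c : R) : q != 0 ->
  (forall k : int, c * q ^ k != 1) -> forall k : int, qgeneric q (c * q ^ k).
Proof. by move=> hq h k j; rewrite -mulrA exprnP -expfzDr. Qed.

Lemma half_norm_Q (y1 y2 y3 : int) : y1 + y2 + y3 = 0 ->
  divz (y1 ^+ 2 + y2 ^+ 2 + y3 ^+ 2) 2 = y1 ^+ 2 + y1 * y2 + y2 ^+ 2.
Proof.
move=> hQ; have -> : y3 = - y1 - y2 by lia.
by rewrite (_ : _ + _ = (y1 ^+ 2 + y1 * y2 + y2 ^+ 2) * 2) ?mulzK //; ring.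
Qed.

Section Corollary.
Variables (R : fieldType) (z w q : R) (y1 y2 y3 : int).
Hypotheses (hQ : y1 + y2 + y3 = 0) (hq : q != 0) (hz : z != 0) (hw : w != 0).
Hypothesis qgen : qgeneric q q.
Hypotheses (gz : forall k : int, qgeneric q (z * q ^ k))
           (gw : forall k : int, qgeneric q (w * q ^ k))
           (gzw : forall k : int, qgeneric q (z * w * q ^ k)).

Local Notation Z := (z * q ^ (y1 - y2)).
Local Notation W := (w * q ^ (y2 - y3)).
Local Notation D := (qpoch (z * q) q (y1 - y2) * qpoch (w * q) q (y2 - y3)
                     * qpoch (z * w * q) q (y1 - y3)).
Local Notation e := (y1 ^+ 2 + y1 * y2 + y2 ^+ 2).

Let hZ : Z != 0. Proof. by rewrite mulf_neq0 // expfz_neq0. Qed.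
Let hW : W != 0. Proof. by rewrite mulf_neq0 // expfz_neq0. Qed.
Let gZ : qgeneric q Z. Proof. exact: gz. Qed.
Let gW : qgeneric q W. Proof. exact: gw. Qed.
Let gZW : qgeneric q (Z * W).
Proof. by rewrite mulrACA -expfzDr //; apply: gzw. Qed.

Lemma Phiy_shift (u v : R) (i j : int) :
  Phiy u v z w q y1 y2 y3 (y1 + i) (y1 + y2 + j) = Phi2 u v Z W q i j / D.
Proof.
rewrite /Phiy; have -> : y1 + i - y1 = i by ring.
by have -> : y1 + y2 + j - y1 - y2 = j by ring.
Qed.

(* First identity: at u = v = 1, Phi2 is Phi itself (contiguity), so after
   the shift by y it is exactly the reproducing property of the kernel. *)
Lemma corollary_part1 (n m : int) :
  zsum y1 n (fun r => zsum (y1 + y2) m (fun s =>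
     Kker n m r s z w q * Phiy 1 1 z w q y1 y2 y3 r s))
  = z ^ y1 * w ^ (y1 + y2) * q ^ e * Phiy 1 1 z w q y1 y2 y3 n m.
Proof.
have gZW' := qgeneric_mulq gZW; have gZq := qgeneric_mulq gZ.
have gWq := qgeneric_mulq gW.
have E i : zsum (y1 + y2) m (fun s =>
      Kker n m (y1 + i) s z w q * Phiy 1 1 z w q y1 y2 y3 (y1 + i) s)
    = z ^ y1 * w ^ (y1 + y2) * q ^ e / D * zsum 0 (m - y1 - y2) (fun j =>
      Kker (n - y1) (m - y1 - y2) i j Z W q * Phi0 Z W q i j).
  rewrite zsum_shift opprD addrA -zsum_mull; apply: zsum_ext => j.
  by rewrite (Kker_shift _ _ _ _ _ hQ) // Phiy_shift Phi2_11 //; ring.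
rewrite zsum_shift (zsum_ext _ _ E) zsum_mull Phi0_reproducing //.
by rewrite /Phiy Phi2_11 //; ring.
Qed.

(* Second identity: Phi2 is a combination of three Phi's; after the shift by y
   the kernel at z/q reproduces each of them ([Phi0_reproducing] and its two
   shifted variants), and the extra factors Z, W are absorbed into u, v. *)
Lemma corollary_part2 (u v : R) (n m : int) :
  zsum y1 n (fun r => zsum (y1 + y2) m (fun s =>
     Kker n m r s (z / q) w q * Phiy u v z w q y1 y2 y3 r s))
  = z ^ y1 * w ^ (y1 + y2) * q ^ (e - y1)
    * Phiy (u * Z) (v * W) z w q y1 y2 y3 n m.
Proof.
have gZq := qgeneric_mulq gZ; have gWq := qgeneric_mulq gW.
have gZW' := qgeneric_mulq gZW.
set c := (z / q) ^ y1 * w ^ (y1 + y2) * q ^ e / D.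
set al := - (u * Z / qpoch Z q 2).
set be := u * v * Z * W ^+ 2 / (qpoch W q 2 * qpoch (Z * W) q 2).
have E i : zsum (y1 + y2) m (fun s =>
      Kker n m (y1 + i) s (z / q) w q * Phiy u v z w q y1 y2 y3 (y1 + i) s)
    = zsum 0 (m - y1 - y2) (fun j => c *
      (Kker (n - y1) (m - y1 - y2) i j (Z / q) W q * Phi0 (Z / q) W q i j
       + al * (Kker (n - y1) (m - y1 - y2) i j (Z / q) W q
               * Phi0 (Z * q) (W / q) q (i - 1) j)
       + be * (Kker (n - y1) (m - y1 - y2) i j (Z / q) W q
               * Phi0 Z (W * q) q (i - 1) (j - 1)))).
  rewrite zsum_shift opprD addrA; apply: zsum_ext => j.
  rewrite (Kker_shift _ _ _ _ _ hQ) ?mulf_neq0 ?invr_neq0 // Phiy_shift.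
  by rewrite [z / q * _]mulrAC /Phi2 /c /al /be; ring.
have gZqq := qgeneric_mulq gZq; have gWqq := qgeneric_mulq gWq.
have gZWqq := qgeneric_mulq gZW'.
have gZ' : qgeneric q (Z / q * q) by rewrite divfK.
have gZW'' : qgeneric q (Z / q * W * q) by rewrite mulrAC divfK.
rewrite zsum_shift (zsum_ext _ _ E) zsum2_lin Phi0_reproducing //.
rewrite Phi0_reproducing_shiftl // Phi0_reproducing_shift2 //.
rewrite /Phiy /Phi2 /c /al /be expfzMl exprz_inv (expfzDr e (- y1) hq).
by ring.
Qed.

End Corollary.

Unset Implicit Arguments.

Theorem corollary4p6 (R : fieldType) (u v z w q : R) (n m y1 y2 y3 : int)
  (hQ : y1 + y2 + y3 = 0)
  (hq0 : q != 0) (hz0 : z != 0) (hw0 : w != 0)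
  (hqroot : forall k : nat, (0 < k)%N -> q ^+ k != 1)
  (hzg : forall k : int, z * q ^ k != 1)
  (hwg : forall k : int, w * q ^ k != 1)
  (hzwg : forall k : int, z * w * q ^ k != 1) :
  zsum y1 n (fun r => zsum (y1 + y2) m (fun s =>
     Kker n m r s z w q * Phiy 1 1 z w q y1 y2 y3 r s))
  = z ^ y1 * w ^ (y1 + y2)
    * q ^ (divz (y1 ^+ 2 + y2 ^+ 2 + y3 ^+ 2) 2)
    * Phiy 1 1 z w q y1 y2 y3 n m
  /\
  zsum y1 n (fun r => zsum (y1 + y2) m (fun s =>
     Kker n m r s (z / q) w q * Phiy u v z w q y1 y2 y3 r s))
  = z ^ y1 * w ^ (y1 + y2)
    * q ^ (divz (y1 ^+ 2 + y2 ^+ 2 + y3 ^+ 2) 2 - y1)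
    * Phiy (u * z * q ^ (y1 - y2)) (v * w * q ^ (y2 - y3)) z w q y1 y2 y3 n m.
Proof.
have qgen : qgeneric q q by move=> k; rewrite -exprS; apply: hqroot.
have gz := qgeneric_int hq0 hzg; have gw := qgeneric_int hq0 hwg.
have gzw := qgeneric_int hq0 hzwg.
rewrite half_norm_Q //; split; first exact: corollary_part1.
by rewrite -[u * z * _]mulrA -[v * w * _]mulrA; apply: corollary_part2.
Qed.
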